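(* Let $N\ge1$, $d_1,d_2,d_3,d_4\ge1$, $\kappa_1,\kappa_2\ge0$, and let $\{(U_i,V_i)\}_{i=1}^N$, $U_i(t)\in\mathbb C^{d_1\times d_2}$, $V_i(t)\in\mathbb C^{d_3\times d_4}$, be a solution of $\dot U_j=\frac{\kappa_1}{N}\sum_k(\langle V_j,V_k\rangle_FU_kU_j^\dagger U_j-\langle V_k,V_j\rangle_FU_jU_k^\dagger U_j)+\frac{\kappa_2}{N}\sum_k(\langle V_j,V_k\rangle_FU_jU_j^\dagger U_k-\langle V_k,V_j\rangle_FU_jU_k^\dagger U_j)$, $\dot V_j=\frac{\kappa_1}{N}\sum_k(\langle U_j,U_k\rangle_FV_kV_j^\dagger V_j-\langle U_k,U_j\rangle_FV_jV_k^\dagger V_j)+\frac{\kappa_2}{N}\sum_k(\langle U_j,U_k\rangle_FV_jV_j^\dagger V_k-\langle U_k,U_j\rangle_FV_jV_k^\dagger V_j)$. Then $\mathcal E(U,V):=1-\frac1{N^2}\sum_{i,j=1}^N\langle U_i,U_j\rangle_F\langle V_i,V_j\rangle_F$ satisfies $$\frac{d}{dt}\mathcal E=-\frac{\kappa_1}{N}\sum_{j=1}^N\Big\|\frac1N\sum_{i=1}^N\big(\langle V_j,V_i\rangle_FU_iU_j^\dagger-\langle V_i,V_j\rangle_FU_jU_i^\dagger\big)\Big\|_F^2-\frac{\kappa_1}{N}\sum_{j=1}^N\Big\|\frac1N\sum_{i=1}^N\big(\langle U_j,U_i\rangle_FV_iV_j^\dagger-\langle U_i,U_j\rangle_FV_jV_i^\dagger\big)\Big\|_F^2$$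 $$-\frac{\kappa_2}{N}\sum_{j=1}^N\Big\|\frac1N\sum_{i=1}^N\big(\langle V_j,V_i\rangle_FU_j^\dagger U_i-\langle V_i,V_j\rangle_FU_i^\dagger U_j\big)\Big\|_F^2-\frac{\kappa_2}{N}\sum_{j=1}^N\Big\|\frac1N\sum_{i=1}^N\big(\langle U_j,U_i\rangle_FV_j^\dagger V_i-\langle U_i,U_j\rangle_FV_i^\dagger V_j\big)\Big\|_F^2.$$ In particular $\mathcal E$ is non-increasing in time.
   Context: $\langle A,B\rangle_F=\mathrm{tr}(A^\dagger B)$ and $\|A\|_F=\sqrt{\langle A,A\rangle_F}$ for complex matrices; sums over $k$ run from $1$ to $N$. *)

From HB Require Import structures.
From mathcomp Require Import all_boot all_order all_algebra.
From mathcomp Require Import complex.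
From mathcomp Require Import all_classical all_reals all_analysis.
Set Implicit Arguments. Unset Strict Implicit. Unset Printing Implicit Defensive.
Import Order.TTheory GRing.Theory Num.Theory.
Local Open Scope ring_scope.

Definition adj (R : rcfType) (m n : nat) (A : 'M[R[i]]_(m, n)) : 'M[R[i]]_(n, m) :=
  (map_mx (@conjc R) A)^T.

Definition frob (R : rcfType) (m n : nat) (A B : 'M[R[i]]_(m, n)) : R[i] :=
  \tr (adj A *m B).

(* Frobenius norm ||A||_F = sqrt <A,A>_F  (<A,A>_F is real and >= 0). *)
Definition frob_norm (R : rcfType) (m n : nat) (A : 'M[R[i]]_(m, n)) : R :=
  Num.sqrt (complex.Re (frob A A)).

Definition cR (R : rcfType) (x : R) : R[i] := Complex x 0.

Definition has_deriv_C (R : realType) (f : R -> R[i]) (t : R) (z : R[i]) : Prop :=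
  is_derive t 1 (fun s => complex.Re (f s)) (complex.Re z) /\
  is_derive t 1 (fun s => complex.Im (f s)) (complex.Im z).

Definition has_deriv_mx (R : realType) (m n : nat) (f : R -> 'M[R[i]]_(m, n))
    (t : R) (D : 'M[R[i]]_(m, n)) : Prop :=
  forall (a : 'I_m) (b : 'I_n), has_deriv_C (fun s => f s a b) t (D a b).

(* Write w_ij = <V_i, V_j>_F, a Hermitian weight.  Along the flow, the derivative of
   S = sum_ij <U_i, U_j>_F w_ij contributed by the U-equation is 2 Re sum_ij <U_i, U_j'>_F w_ij.
   With W_j = sum_i w_ij U_i^dagger, P_j = U_j W_j and Q_j = W_j U_j, the U-equation reads
   U_j' = (k1/N) (P_j^dagger - P_j) U_j + (k2/N) U_j (Q_j^dagger - Q_j), and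
   sum_i w_ij <U_i, X>_F = tr (W_j X).  Hence that contribution is
   (k1/N) 2 Re tr ((P_j^dagger - P_j) P_j) + (k2/N) 2 Re tr ((Q_j^dagger - Q_j) Q_j), and
   2 Re tr ((P^dagger - P) P) = ||P^dagger - P||_F^2.  The V-equation is symmetric, so the
   derivative of E = 1 - S / N^2 is minus a sum of squares, and E decreases by the mean value
   theorem. *)

From HB Require Import structures.
From mathcomp Require Import all_boot all_order all_algebra.
From mathcomp Require Import complex.
From mathcomp Require Import all_classical all_reals all_analysis.
From mathcomp Require Import ring.
Import Order.TTheory GRing.Theory Num.Theory.
Local Open Scope ring_scope.
Set Implicit Arguments. Unset Strict Implicit. Unset Printing Implicit Defensive.

Section Frobenius.
Variable R : rcfType.
Local Notation C := R[i].
Local Notation cj := (@conjc R).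

Lemma cRE (x : R) : cR x = x%:C%C. Proof. by []. Qed.

Lemma cRD (x y : R) : cR (x + y) = cR x + cR y. Proof. by rewrite !cRE rmorphD. Qed.

Lemma cRM (x y : R) : cR (x * y) = cR x * cR y. Proof. by rewrite !cRE rmorphM. Qed.

Lemma cR_sum I (r : seq I) (P : pred I) (F : I -> R) :
  cR (\sum_(i <- r | P i) F i) = \sum_(i <- r | P i) cR (F i).
Proof. by rewrite cRE rmorph_sum. Qed.

Lemma cRN (x : R) : cR (- x) = - cR x. Proof. by rewrite !cRE rmorphN. Qed.

Lemma cRV (x : R) : cR x^-1 = (cR x)^-1. Proof. by rewrite !cRE fmorphV. Qed.

Lemma cRX (x : R) k : cR (x ^+ k) = cR x ^+ k. Proof. by rewrite !cRE rmorphXn. Qed.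

Lemma cR_nat k : cR (k%:R : R) = k%:R. Proof. by rewrite cRE rmorph_nat. Qed.

Lemma cR_divn (x : R) k : cR (x / k%:R) = cR x / k%:R.
Proof. by rewrite cRM cRV cR_nat. Qed.

Lemma adjmxE m n (A : 'M[C]_(m, n)) i j : adj A i j = cj (A j i).
Proof. by rewrite /adj !mxE. Qed.

Lemma adjmxK m n (A : 'M[C]_(m, n)) : adj (adj A) = A.
Proof. by apply/matrixP => i j; rewrite !adjmxE conjcK. Qed.

Lemma adjmx0 m n : adj (0 : 'M[C]_(m, n)) = 0.
Proof. by apply/matrixP => i j; rewrite adjmxE !mxE conjc0. Qed.

Lemma adjmxD m n (A B : 'M[C]_(m, n)) : adj (A + B) = adj A + adj B.
Proof. by rewrite /adj map_mxD raddfD. Qed.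

Lemma adjmxB m n (A B : 'M[C]_(m, n)) : adj (A - B) = adj A - adj B.
Proof. by rewrite /adj map_mxB raddfB. Qed.

Lemma adjmxZ m n c (A : 'M[C]_(m, n)) : adj (c *: A) = cj c *: adj A.
Proof. by rewrite /adj map_mxZ linearZ. Qed.

Lemma adjmxM m n p (A : 'M[C]_(m, n)) (B : 'M[C]_(n, p)) :
  adj (A *m B) = adj B *m adj A.
Proof. by rewrite /adj map_mxM trmx_mul. Qed.

Lemma adjmx_sum m n I (r : seq I) (P : pred I) (F : I -> 'M[C]_(m, n)) :
  adj (\sum_(i <- r | P i) F i) = \sum_(i <- r | P i) adj (F i).
Proof. exact: (big_morph _ (@adjmxD m n) (@adjmx0 m n)). Qed.

Lemma conj_mxtrace n (A : 'M[C]_n) : cj (\tr A) = \tr (adj A).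
Proof. by rewrite /mxtrace rmorph_sum; apply: eq_bigr => k _; rewrite adjmxE. Qed.

Lemma frobE m n (A B : 'M[C]_(m, n)) :
  frob A B = \sum_k \sum_l cj (A l k) * B l k.
Proof.
rewrite /frob /mxtrace; apply: eq_bigr => k _; rewrite mxE.
by apply: eq_bigr => l _; rewrite adjmxE.
Qed.

Lemma conj_frob m n (A B : 'M[C]_(m, n)) : cj (frob A B) = frob B A.
Proof. by rewrite /frob conj_mxtrace adjmxM adjmxK mxtrace_mulC. Qed.

Lemma frob_self m n (A : 'M[C]_(m, n)) : frob A A = cR (frob_norm A ^+ 2).
Proof.
pose s := \sum_k \sum_l (complex.Re (A l k) ^+ 2 + complex.Im (A l k) ^+ 2).
have frobAA : frob A A = cR s.
  rewrite frobE cRE rmorph_sum; apply: eq_bigr => k _; rewrite rmorph_sum.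
  apply: eq_bigr => l _; case: (A l k) => x y.
  by apply/eqP; rewrite eq_complex /=; apply/andP; split; apply/eqP; ring.
have s_ge0 : 0 <= s by do 2!apply: sumr_ge0 => ? _; rewrite addr_ge0 ?sqr_ge0.
by rewrite /frob_norm frobAA /= sqr_sqrtr.
Qed.

Lemma frob_normZ_sqr m n (c : R) (A : 'M[C]_(m, n)) :
  frob_norm (cR c *: A) ^+ 2 = c ^+ 2 * frob_norm A ^+ 2.
Proof.
apply: complexI; rewrite -[LHS]cRE -frob_self /frob adjmxZ -scalemxAl -scalemxAr.
by rewrite !mxtraceZ -/(frob A A) frob_self cRE conjc_real mulrA -!rmorphM expr2.
Qed.

Lemma frob_adjB_trace n (P : 'M[C]_n) :
  frob (adj P - P) (adj P - P)
  = \tr ((adj P - P) *m P) + cj (\tr ((adj P - P) *m P)).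
Proof.
rewrite conj_mxtrace adjmxM adjmxB adjmxK /frob adjmxB adjmxK.
rewrite !mulmxBl !mulmxBr !raddfB /= [\tr (P *m adj P)]mxtrace_mulC.
ring.
Qed.

Lemma sum_frob_normVn_sqr m n I (r : seq I) k (F : I -> 'M[C]_(m, n)) :
  \sum_(i <- r) frob_norm (k%:R^-1 *: F i) ^+ 2
  = k%:R ^- 2 * \sum_(i <- r) frob_norm (F i) ^+ 2.
Proof.
rewrite mulr_sumr; apply: eq_bigr => i _.
by rewrite -cR_nat -cRV frob_normZ_sqr exprVn.
Qed.

End Frobenius.

Section Gradient.
Variables (R : rcfType) (N m n : nat).
Local Notation C := R[i].
Local Notation cj := (@conjc R).
Variables (U : 'I_N -> 'M[C]_(m, n)) (w : 'I_N -> 'I_N -> C).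
Hypothesis w_herm : forall i j, cj (w i j) = w j i.

Let W j := \sum_(i < N) w i j *: adj (U i).
Let P j := U j *m W j.
Let Q j := W j *m U j.

Lemma sum_frob_weight j (Y : 'M[C]_(m, n)) :
  \sum_(i < N) frob (U i) Y * w i j = \tr (W j *m Y).
Proof.
rewrite /W mulmx_suml linear_sum; apply: eq_bigr => i _.
by rewrite -scalemxAl linearZ mulrC.
Qed.

Lemma adjP_subP j : adj (P j) - P j =
  \sum_(i < N) (w j i *: (U i *m adj (U j)) - w i j *: (U j *m adj (U i))).
Proof.
rewrite /P /W adjmxM adjmx_sum mulmx_sumr mulmx_suml -sumrB.
by apply: eq_bigr => i _; rewrite adjmxZ adjmxK w_herm -scalemxAl -scalemxAr.
Qed.

Lemma adjQ_subQ j : adj (Q j) - Q j =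
  \sum_(i < N) (w j i *: (adj (U j) *m U i) - w i j *: (adj (U i) *m U j)).
Proof.
rewrite /Q /W adjmxM adjmx_sum mulmx_sumr mulmx_suml -sumrB.
by apply: eq_bigr => i _; rewrite adjmxZ adjmxK w_herm -scalemxAl -scalemxAr.
Qed.

Lemma flow_fieldE (c1 c2 : C) j :
  c1 *: \sum_(k < N) (w j k *: (U k *m adj (U j) *m U j)
                      - w k j *: (U j *m adj (U k) *m U j))
  + c2 *: \sum_(k < N) (w j k *: (U j *m adj (U j) *m U k)
                        - w k j *: (U j *m adj (U k) *m U j))
  = c1 *: ((adj (P j) - P j) *m U j) + c2 *: (U j *m (adj (Q j) - Q j)).
Proof.
rewrite adjP_subP adjQ_subQ mulmx_suml mulmx_sumr.
congr (_ *: _ + _ *: _); apply: eq_bigr => k _.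
  by rewrite mulmxBl -!scalemxAl.
by rewrite mulmxBr -!scalemxAr !mulmxA.
Qed.

Lemma gradient_flow_dissipation (c1 c2 : R) (dU : 'I_N -> 'M[C]_(m, n)) :
  (forall j, dU j =
     cR c1 *: \sum_(k < N) (w j k *: (U k *m adj (U j) *m U j)
                            - w k j *: (U j *m adj (U k) *m U j))
   + cR c2 *: \sum_(k < N) (w j k *: (U j *m adj (U j) *m U k)
                            - w k j *: (U j *m adj (U k) *m U j))) ->
  \sum_(i < N) \sum_(j < N) (frob (dU i) (U j) + frob (U i) (dU j)) * w i j
  = cR (c1 * \sum_(j < N) frob_norm (\sum_(i < N)
          (w j i *: (U i *m adj (U j)) - w i j *: (U j *m adj (U i)))) ^+ 2
      + c2 * \sum_(j < N) frob_norm (\sum_(i < N)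
          (w j i *: (adj (U j) *m U i) - w i j *: (adj (U i) *m U j))) ^+ 2).
Proof.
move=> dUE.
pose X := \sum_(i < N) \sum_(j < N) frob (U i) (dU j) * w i j.
have XE : X = \sum_(j < N) (cR c1 * \tr ((adj (P j) - P j) *m P j)
                           + cR c2 * \tr ((adj (Q j) - Q j) *m Q j)).
  rewrite /X exchange_big; apply: eq_bigr => j _.
  rewrite sum_frob_weight dUE flow_fieldE.
  rewrite mulmxDr -!scalemxAr raddfD /= !mxtraceZ /P /Q.
  congr (_ * _ + _ * _); first by rewrite mxtrace_mulC -mulmxA.
  by rewrite [in LHS]mulmxA mxtrace_mulC.
have conjX : cj X = \sum_(i < N) \sum_(j < N) frob (dU i) (U j) * w i j.
  rewrite /X rmorph_sum; under eq_bigr => i _ do rewrite rmorph_sum.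
  rewrite exchange_big; apply: eq_bigr => i _; apply: eq_bigr => j _.
  by rewrite rmorphM /= conj_frob w_herm.
transitivity (cj X + X).
  rewrite conjX -big_split; apply: eq_bigr => i _.
  by rewrite -big_split; apply: eq_bigr => j _; rewrite mulrDl.
rewrite XE rmorph_sum -big_split /= cRD !cRM !cR_sum !mulr_sumr -big_split /=.
apply: eq_bigr => j _.
rewrite rmorphD !rmorphM /= oppr0 -/(cR c1) -/(cR c2) -!frob_self -adjP_subP -adjQ_subQ.
by rewrite !frob_adjB_trace; ring.
Qed.

End Gradient.

Section ComplexDerivative.
Variable R : realType.
Local Notation C := R[i].
Local Notation Re := complex.Re.
Local Notation Im := complex.Im.
Implicit Types (f g : R -> C) (t : R) (z w : C).

Lemma has_deriv_C_eq f t z w : has_deriv_C f t z -> z = w -> has_deriv_C f t w.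
Proof. by move=> + <-. Qed.

Lemma has_deriv_C_cst (c : C) t : has_deriv_C (fun=> c) t 0.
Proof. by split; apply: is_derive_cst. Qed.

Lemma has_deriv_CD f g t z w : has_deriv_C f t z -> has_deriv_C g t w ->
  has_deriv_C (fun s => f s + g s) t (z + w).
Proof.
case: z w => [z1 z2] [w1 w2] [fRe fIm] [gRe gIm]; split.
- have -> : (fun s => Re (f s + g s)) = (fun s => Re (f s)) + (fun s => Re (g s)).
    by apply/funext => s; rewrite fctE; case: (f s) (g s) => [? ?] [? ?].
  exact: is_derive_eq (is_deriveD fRe gRe) _.
- have -> : (fun s => Im (f s + g s)) = (fun s => Im (f s)) + (fun s => Im (g s)).
    by apply/funext => s; rewrite fctE; case: (f s) (g s) => [? ?] [? ?].
  exact: is_derive_eq (is_deriveD fIm gIm) _.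
Qed.

Lemma has_deriv_CN f t z : has_deriv_C f t z -> has_deriv_C (fun s => - f s) t (- z).
Proof.
case: z => [z1 z2] [fRe fIm]; split.
- have -> : (fun s => Re (- f s)) = - (fun s => Re (f s)).
    by apply/funext => s; rewrite fctE; case: (f s).
  exact: is_derive_eq (is_deriveN fRe) _.
- have -> : (fun s => Im (- f s)) = - (fun s => Im (f s)).
    by apply/funext => s; rewrite fctE; case: (f s).
  exact: is_derive_eq (is_deriveN fIm) _.
Qed.

Lemma has_deriv_CB f g t z w : has_deriv_C f t z -> has_deriv_C g t w ->
  has_deriv_C (fun s => f s - g s) t (z - w).
Proof. by move=> df dg; apply: has_deriv_CD => //; apply: has_deriv_CN. Qed.

Lemma has_deriv_CM f g t z w : has_deriv_C f t z -> has_deriv_C g t w ->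
  has_deriv_C (fun s => f s * g s) t (z * g t + f t * w).
Proof.
move=> [fRe fIm] [gRe gIm]; split.
- have -> : (fun s => Re (f s * g s)) =
     (fun s => Re (f s)) * (fun s => Re (g s)) - (fun s => Im (f s)) * (fun s => Im (g s)).
    by apply/funext => s; rewrite !fctE; case: (f s) (g s) => [? ?] [? ?].
  apply: (is_derive_eq (is_deriveB (is_deriveM fRe gRe) (is_deriveM fIm gIm))).
  move=> {fRe fIm gRe gIm}; case: z w (f t) (g t) => [? ?] [? ?] [? ?] [? ?] /=.
  rewrite /GRing.scale /=; ring.
- have -> : (fun s => Im (f s * g s)) =
     (fun s => Re (f s)) * (fun s => Im (g s)) + (fun s => Im (f s)) * (fun s => Re (g s)).
    by apply/funext => s; rewrite !fctE; case: (f s) (g s) => [? ?] [? ?].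
  apply: (is_derive_eq (is_deriveD (is_deriveM fRe gIm) (is_deriveM fIm gRe))).
  move=> {fRe fIm gRe gIm}; case: z w (f t) (g t) => [? ?] [? ?] [? ?] [? ?] /=.
  rewrite /GRing.scale /=; ring.
Qed.

Lemma has_deriv_C_conj f t z :
  has_deriv_C f t z -> has_deriv_C (fun s => (f s)^*%C) t z^*%C.
Proof.
case: z => [z1 z2] [fRe fIm]; split.
- have -> : (fun s => Re (f s)^*%C) = (fun s => Re (f s)).
    by apply/funext => s; case: (f s).
  exact: fRe.
- have -> : (fun s => Im (f s)^*%C) = - (fun s => Im (f s)).
    by apply/funext => s; rewrite fctE; case: (f s).
  exact: is_derive_eq (is_deriveN fIm) _.
Qed.

Lemma has_deriv_C_sum I (r : seq I) (F : I -> R -> C) (D : I -> C) t :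
  (forall i, has_deriv_C (F i) t (D i)) ->
  has_deriv_C (fun s => \sum_(i <- r) F i s) t (\sum_(i <- r) D i).
Proof.
move=> dF; elim: r => [|i r IHr].
  under eq_fun => s do rewrite big_nil.
  by rewrite big_nil; apply: has_deriv_C_cst.
under eq_fun => s do rewrite big_cons.
by rewrite big_cons; apply: has_deriv_CD.
Qed.

Lemma has_deriv_frob m n (A B : R -> 'M[C]_(m, n)) t dA dB :
  has_deriv_mx A t dA -> has_deriv_mx B t dB ->
  has_deriv_C (fun s => frob (A s) (B s)) t (frob dA (B t) + frob (A t) dB).
Proof.
move=> hA hB; under eq_fun => s do rewrite frobE.
rewrite !frobE -big_split; apply: has_deriv_C_sum => k.
rewrite -big_split; apply: has_deriv_C_sum => l.
exact: has_deriv_CM (has_deriv_C_conj (hA l k)) (hB l k).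
Qed.

End ComplexDerivative.

Lemma has_deriv_C_Re_nonincreasing (R : realType) (a b : \bar R)
    (E : R -> R[i]) (D : R -> R) :
  (forall t, (a < t%:E < b)%E -> has_deriv_C E t (cR (D t))) ->
  (forall t, (a < t%:E < b)%E -> D t <= 0) ->
  forall s t, (a < s%:E < b)%E -> (a < t%:E < b)%E -> s <= t ->
    complex.Re (E t) <= complex.Re (E s).
Proof.
move=> dE D_le0 s t /andP[a_s s_b] /andP[a_t t_b] st.
have inab x : s <= x <= t -> (a < x%:E < b)%E.
  case/andP=> sx xt; apply/andP; split.
    by apply: lt_le_trans a_s _; rewrite lee_fin.
  by apply: le_lt_trans t_b; rewrite lee_fin.
pose f x := complex.Re (E x).
have df x : s <= x <= t -> derivable f x 1 by move=> /inab /dE [[]].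
have df_open : {in `]s, t[, forall x, derivable f x 1}.
  by move=> x; rewrite in_itv /= => /andP[sx xt]; apply: df; rewrite !ltW.
have f'_le0 x : x \in `]s, t[ -> derive1 f x <= 0.
  rewrite in_itv /= => /andP[sx xt].
  have xab : (a < x%:E < b)%E by apply: inab; rewrite !ltW.
  by rewrite derive1E /f; have [[_ ->] _] := dE x xab; apply: D_le0.
have s_in : s \in `[s, t] by rewrite in_itv /= lexx st.
have t_in : t \in `[s, t] by rewrite in_itv /= lexx st.
apply: (ler0_derive1_le_cc df_open f'_le0 _ t_in s_in st).
by apply: derivable_within_continuous => x; rewrite in_itv /=; apply: df.
Qed.

Theorem lemma3p1 (R : realType) (N d1 d2 d3 d4 : nat)
  (hN : (0 < N)%N) (hd1 : (0 < d1)%N) (hd2 : (0 < d2)%N)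
  (hd3 : (0 < d3)%N) (hd4 : (0 < d4)%N)
  (k1 k2 : R) (hk1 : 0 <= k1) (hk2 : 0 <= k2)
  (a b : \bar R)
  (U : 'I_N -> R -> 'M[R[i]]_(d1, d2)) (V : 'I_N -> R -> 'M[R[i]]_(d3, d4))
  (hU : forall t : R, (a < t%:E < b)%E -> forall j : 'I_N,
     has_deriv_mx (U j) t
       ((cR k1 / N%:R) *: \sum_(k < N)
           (frob (V j t) (V k t) *: (U k t *m adj (U j t) *m U j t)
            - frob (V k t) (V j t) *: (U j t *m adj (U k t) *m U j t))
      + (cR k2 / N%:R) *: \sum_(k < N)
           (frob (V j t) (V k t) *: (U j t *m adj (U j t) *m U k t)
            - frob (V k t) (V j t) *: (U j t *m adj (U k t) *m U j t))))
  (hV : forall t : R, (a < t%:E < b)%E -> forall j : 'I_N,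
     has_deriv_mx (V j) t
       ((cR k1 / N%:R) *: \sum_(k < N)
           (frob (U j t) (U k t) *: (V k t *m adj (V j t) *m V j t)
            - frob (U k t) (U j t) *: (V j t *m adj (V k t) *m V j t))
      + (cR k2 / N%:R) *: \sum_(k < N)
           (frob (U j t) (U k t) *: (V j t *m adj (V j t) *m V k t)
            - frob (U k t) (U j t) *: (V j t *m adj (V k t) *m V j t)))) :
  let E := fun t : R => 1 - (N%:R ^+ 2)^-1 *
      \sum_(i < N) \sum_(j < N) frob (U i t) (U j t) * frob (V i t) (V j t) in
  (forall t : R, (a < t%:E < b)%E ->
     has_deriv_C E t (cR (
         - (k1 / N%:R) * \sum_(j < N) frob_norm (N%:R^-1 *: \sum_(i < N)
              (frob (V j t) (V i t) *: (U i t *m adj (U j t))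
               - frob (V i t) (V j t) *: (U j t *m adj (U i t)))) ^+ 2
         - (k1 / N%:R) * \sum_(j < N) frob_norm (N%:R^-1 *: \sum_(i < N)
              (frob (U j t) (U i t) *: (V i t *m adj (V j t))
               - frob (U i t) (U j t) *: (V j t *m adj (V i t)))) ^+ 2
         - (k2 / N%:R) * \sum_(j < N) frob_norm (N%:R^-1 *: \sum_(i < N)
              (frob (V j t) (V i t) *: (adj (U j t) *m U i t)
               - frob (V i t) (V j t) *: (adj (U i t) *m U j t))) ^+ 2
         - (k2 / N%:R) * \sum_(j < N) frob_norm (N%:R^-1 *: \sum_(i < N)
              (frob (U j t) (U i t) *: (adj (V j t) *m V i t)
               - frob (U i t) (U j t) *: (adj (V i t) *m V j t))) ^+ 2)))
  /\
  (forall s t : R, (a < s%:E < b)%E -> (a < t%:E < b)%E -> s <= t ->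
     complex.Re (E t) <= complex.Re (E s)).
Proof.
move=> E.
apply: (fun dE => conj dE (has_deriv_C_Re_nonincreasing dE _)).
  move=> _ t _; rewrite !mulNr -!opprD oppr_le0.
  by rewrite !addr_ge0 // mulr_ge0 ?divr_ge0 ?sumr_ge0 // => j _; apply: sqr_ge0.
move=> t tab.
have dU := hU t tab; have dV := hV t tab.
have dF i j := has_deriv_CM (has_deriv_frob (dU i) (dU j)) (has_deriv_frob (dV i) (dV j)).
apply: has_deriv_C_eq (has_deriv_CB (has_deriv_C_cst 1 t)
  (has_deriv_CM (has_deriv_C_cst _ t) (has_deriv_C_sum _ (fun i => has_deriv_C_sum _ (dF i))))) _.
rewrite sub0r mul0r add0r; under eq_bigr => i _ do rewrite big_split; rewrite big_split /=.
rewrite [X in _ + X](eq_bigr _ (fun i _ => eq_bigr _ (fun j _ => mulrC _ _))).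
rewrite (gradient_flow_dissipation (fun i j => conj_frob (V i t) (V j t))
  (c1 := k1 / N%:R) (c2 := k2 / N%:R)); last by move=> j; rewrite !cR_divn.
rewrite (gradient_flow_dissipation (fun i j => conj_frob (U i t) (U j t))
  (c1 := k1 / N%:R) (c2 := k2 / N%:R)); last by move=> j; rewrite !cR_divn.
(* Rescaling right to left avoids slow failed matches against already rescaled sums. *)
rewrite [X in cR (_ - _ * X)]sum_frob_normVn_sqr.
rewrite [X in cR (_ - _ * X - _)]sum_frob_normVn_sqr.
rewrite [X in cR (_ - _ * X - _ - _)]sum_frob_normVn_sqr.
rewrite [X in cR (- _ * X - _ - _ - _)]sum_frob_normVn_sqr.
rewrite -(cR_nat _ N) -cRX -cRV -cRD -cRM -cRN.
by congr cR; ring.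
Qed.
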